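(* Let $G=(V,E)$ be a finite, simple, connected graph with $|V|\geq 3$ and let $d\in\mathrm{Der}(\mathcal{A}(G))$ with $d(e_i)=\sum_{k\in V}d_{ik}e_k$. If $d_{k\ell}\neq 0$ for some $k,\ell\in V$ with $k\neq\ell$, then there is a twin class $\mathcal{T}\subset V$ with $|\mathcal{T}|\geq 3$ such that $k,\ell\in\mathcal{T}$.
   Context: Throughout, $\mathbb{K}$ is a field of characteristic $0$. A graph $G=(V,E)$ has vertex set $V=\{1,\dots,n\}$ and is assumed finite, simple (no loops, no multiple edges) and connected. $\mathcal{N}(i)$ denotes the set of neighbors of vertex $i$, and $(a_{ij})$ is the adjacency matrix ($a_{ij}=1$ if $i,j$ are adjacent, $0$ otherwise). The evolution algebra $\mathcal{A}(G)$ is the $\mathbb{K}$-algebra with basis $\{e_i: i\in V\}$ and product $e_i\cdot e_i=\sum_{k\in V}a_{ik}e_k=\sum_{k\in\mathcal{N}(i)}e_k$ and $e_i\cdot e_j=0$ for $i\neq j$. A derivation of $\mathcal{A}(G)$ is a linear map $d:\mathcal{A}(G)\to\mathcal{A}(G)$ with $d(u\cdot v)=d(u)\cdot v+u\cdot d(v)$ for all $u,v$; $\mathrm{Der}(\mathcal{A}(G))$ is the space of derivations, and for $d$ in it we write $d(e_i)=\sum_{k\in V}d_{ik}e_k$. Two vertices $i,j$ are twins if $\mathcal{N}(i)=\mathcal{N}(j)$; this is an equivalence relation whose classes are called twin classes. *)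

From HB Require Import structures.
From mathcomp Require Import all_boot all_order all_algebra.
Set Implicit Arguments. Unset Strict Implicit. Unset Printing Implicit Defensive.
Import GRing.Theory.
Local Open Scope ring_scope.

Definition simple_graph (n : nat) (adj : rel 'I_n) : Prop :=
  symmetric adj /\ irreflexive adj.

Definition connected_graph (n : nat) (adj : rel 'I_n) : Prop :=
  forall i j : 'I_n, connect adj i j.

Definition adjK (K : fieldType) (n : nat) (adj : rel 'I_n) (i j : 'I_n) : K :=
  (adj i j)%:R.

(* Elements of the evolution algebra A(G) are coordinate row vectors
   w.r.t. the natural basis {e_i}: u = \sum_i u_i e_i. *)
Definition basis_vec (K : fieldType) (n : nat) (i : 'I_n) : 'rV[K]_n :=
  delta_mx 0 i.

(* Product of A(G): e_i e_i = \sum_k a_ik e_k, e_i e_j = 0 (i <> j),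
   extended bilinearly: (u v)_k = \sum_i u_i v_i a_ik. *)
Definition evo_mul (K : fieldType) (n : nat) (adj : rel 'I_n)
  (u v : 'rV[K]_n) : 'rV[K]_n :=
  \row_k \sum_i u 0 i * v 0 i * adjK K adj i k.

Definition is_derivation (K : fieldType) (n : nat) (adj : rel 'I_n)
  (d : {linear 'rV[K]_n -> 'rV[K]_n}) : Prop :=
  forall u v : 'rV[K]_n,
    d (evo_mul adj u v) = evo_mul adj (d u) v + evo_mul adj u (d v).

Definition der_coef (K : fieldType) (n : nat)
  (d : 'rV[K]_n -> 'rV[K]_n) (i k : 'I_n) : K :=
  d (basis_vec K i) 0 k.

Definition twins (n : nat) (adj : rel 'I_n) (i j : 'I_n) : bool :=
  [forall k, adj i k == adj j k].

Definition twin_class (n : nat) (adj : rel 'I_n) (i : 'I_n) : {set 'I_n} :=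
  [set j | twins adj i j].

Definition is_twin_class (n : nat) (adj : rel 'I_n) (T : {set 'I_n}) : Prop :=
  exists i, T = twin_class adj i.

(* Expanding [d] on the products [e_i e_j = 0] (i <> j) and [e_i e_i] gives
   [d_ij a_jq + d_ji a_iq = 0] and [\sum_p a_ip d_pq = 2 d_ii a_iq].  The first
   identity shows that [d_ij <> 0] forces [i] and [j] to be twins with
   [d_ji = - d_ij]; the second then shows [d_ii = d_jj] for twins.  If the twin
   class of [k] and [l] were just [{k, l}], the second identity at a common
   neighbour [m] of [k] and [l], in the columns [k] and [l], would give
   [d_kk - d_kl = 2 d_mm = d_kl + d_ll], hence [2 d_kl = 0]. *)

From HB Require Import structures.
From mathcomp Require Import all_boot all_order all_algebra ring.
Import GRing.Theory.
Local Open Scope ring_scope.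

Lemma sum_basis_vec_mul {K : fieldType} {n : nat} (i : 'I_n) (f : 'I_n -> K) :
  \sum_p basis_vec K i 0 p * f p = f i.
Proof.
rewrite (bigD1 i) //= big1 ?addr0 => [|p /negbTE nip].
  by rewrite mxE !eqxx mul1r.
by rewrite mxE eqxx /= nip mul0r.
Qed.

Lemma linear_row_coef {K : fieldType} {n : nat}
    (d : {linear 'rV[K]_n -> 'rV[K]_n}) (u : 'rV[K]_n) (q : 'I_n) :
  d u 0 q = \sum_p u 0 p * der_coef d p q.
Proof.
rewrite {1}(row_sum_delta u) linear_sum summxE.
by apply: eq_bigr => p _; rewrite linearZ mxE.
Qed.

Lemma connect_neighbour {n : nat} {adj : rel 'I_n} {i j : 'I_n} :
  connect adj i j -> i != j -> exists m, adj i m.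
Proof.
move=> /connectP[[|m p] /=]; first by move=> _ ->; rewrite eqxx.
by move=> /andP[aim _] _ _; exists m.
Qed.

Lemma twinsP {n : nat} {adj : rel 'I_n} (i j : 'I_n) :
  reflect (adj i =1 adj j) (twins adj i j).
Proof. by apply: (iffP forallP) => h x; apply/eqP. Qed.

Lemma twin_classE {n : nat} {adj : rel 'I_n} {i j : 'I_n} :
  twins adj i j -> twin_class adj i = twin_class adj j.
Proof.
move=> /twinsP tij; apply/setP => x; rewrite !inE.
by apply: eq_forallb => y; rewrite tij.
Qed.

Section EvolutionProduct.

Context {K : fieldType} {n : nat} (adj : rel 'I_n).

Lemma evo_mul_basis_vecr (u : 'rV[K]_n) (j q : 'I_n) :
  evo_mul adj u (basis_vec K j) 0 q = u 0 j * adjK K adj j q.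
Proof.
rewrite mxE -(sum_basis_vec_mul j (fun p => u 0 p * adjK K adj p q)).
by apply: eq_bigr => p _; rewrite mulrAC mulrC mulrA.
Qed.

Lemma evo_mul_basis_vecl (v : 'rV[K]_n) (i q : 'I_n) :
  evo_mul adj (basis_vec K i) v 0 q = v 0 i * adjK K adj i q.
Proof.
rewrite mxE -(sum_basis_vec_mul i (fun p => v 0 p * adjK K adj p q)).
by apply: eq_bigr => p _; rewrite mulrA.
Qed.

Lemma adjKE (i j : 'I_n) : adjK K adj i j = if adj i j then 1 else 0.
Proof. by rewrite /adjK; case: (adj i j). Qed.

End EvolutionProduct.

Section DerivationCoefficients.

Context {K : fieldType} {n : nat} {adj : rel 'I_n}.
Context {d : {linear 'rV[K]_n -> 'rV[K]_n}} (hd : is_derivation adj d).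

Local Notation a := (adjK K adj).
Local Notation c := (der_coef d).

Lemma der_coef_basis_mul {i j : 'I_n} : i != j -> forall q : 'I_n,
  c i j * a j q + c j i * a i q = 0.
Proof.
move=> nij q.
have := congr1 (fun M : 'rV[K]_n => M 0 q) (hd (basis_vec K i) (basis_vec K j)).
rewrite /= mxE evo_mul_basis_vecr evo_mul_basis_vecl => <-.
rewrite linear_row_coef big1 // => p _.
rewrite mxE big1 ?mul0r // => r _.
rewrite !mxE eqxx /=.
by have [->|_] := eqVneq r i; rewrite ?(negbTE nij) ?mulr0 ?mul0r.
Qed.

Lemma der_coef_basis_sqr (i q : 'I_n) :
  \sum_p a i p * c p q = 2%:R * (c i i * a i q).
Proof.
have := congr1 (fun M : 'rV[K]_n => M 0 q) (hd (basis_vec K i) (basis_vec K i)).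
rewrite /= mxE evo_mul_basis_vecr evo_mul_basis_vecl mulr_natl mulr2n => <-.
rewrite linear_row_coef; apply: eq_bigr => p _; congr (_ * _).
rewrite mxE -(sum_basis_vec_mul i (fun r => a r p)).
apply: eq_bigr => r _; rewrite !mxE eqxx /=.
by case: (r == i); rewrite ?mul1r ?mul0r.
Qed.

Lemma der_coef_twins {i j m : 'I_n} : adj j m -> c i j != 0 -> twins adj i j.
Proof.
move=> ajm; apply: contraNT => /forallPn[x].
have [->|nij] := eqVneq i j; first by rewrite eqxx.
(* [x] separates [i] from [j]; if [x] is adjacent to [i] only, the identity at
   [x] kills [c j i], and then the identity at [m] kills [c i j]. *)
have eij := der_coef_basis_mul nij x; rewrite !adjKE in eij.
case: (adj i x) (adj j x) eij => [] [] //=; rewrite ?mulr0 ?mulr1 ?addr0 ?add0r;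
  last by move=> ->.
move=> cji0 _; have := der_coef_basis_mul nij m.
by rewrite !adjKE ajm cji0 mul0r addr0 mulr1 => ->.
Qed.

Lemma der_coef_twins_opp {i j m : 'I_n} : i != j -> twins adj i j -> adj j m ->
  c j i = - c i j.
Proof.
move=> nij /twinsP tij ajm; apply/eqP; rewrite -addr_eq0 addrC.
by have := der_coef_basis_mul nij m; rewrite !adjKE tij ajm !mulr1 => ->.
Qed.

Lemma der_coef_twins_diag {i j m : 'I_n} : (2%:R : K) != 0 ->
  twins adj i j -> adj i m -> c i i = c j j.
Proof.
move=> two_neq0 /twinsP tij aim; apply: (mulfI two_neq0).
have := der_coef_basis_sqr i m; rewrite (eq_bigr (fun p => a j p * c p m)).
  by rewrite der_coef_basis_sqr !adjKE -tij aim !mulr1.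
by move=> p _; rewrite /adjK tij.
Qed.

Lemma sum_der_coef_twin_class (i : 'I_n) {q m : 'I_n} : adj q m ->
  \sum_p a i p * c p q = \sum_(p in twin_class adj q) a i p * c p q.
Proof.
move=> aqm; rewrite [RHS]big_mkcond /=; apply: eq_bigr => p _.
rewrite inE; case: ifP => // /negbT ntqp.
suff -> : c p q = 0 by rewrite mulr0.
apply: contraNeq ntqp => /(der_coef_twins aqm) /twinsP tpq.
by apply/twinsP => x; rewrite tpq.
Qed.

Lemma der_coef_twin_class_card {k l m : 'I_n} :
  (2%:R : K) != 0 -> symmetric adj ->
  k != l -> c k l != 0 -> adj l m -> (3 <= #|twin_class adj k|)%N.
Proof.
move=> two_neq0 adj_sym nkl ckl alm.
have tkl := der_coef_twins alm ckl.
have akm : adj k m by have /twinsP -> := tkl.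
rewrite leqNgt; apply/negP => small.
have Tkl : twin_class adj k = [set k; l].
  apply/eqP; rewrite eq_sym eqEcard cards2 nkl -ltnS small andbT.
  apply/subsetP => x; rewrite !inE => /orP[] /eqP -> //.
  exact/twinsP.
have sum_pair q : adj q m -> twin_class adj q = [set k; l] ->
    c k q + c l q = 2%:R * c m m.
  move=> aqm Tq; have := der_coef_basis_sqr m q.
  rewrite (sum_der_coef_twin_class _ aqm) Tq big_setU1 ?inE //= big_set1.
  by rewrite !adjKE !(adj_sym m) akm alm aqm !mul1r mulr1.
have Tl : twin_class adj l = [set k; l] by rewrite -(twin_classE tkl).
have := sum_pair k akm Tkl; rewrite -(sum_pair l alm Tl).
rewrite (der_coef_twins_opp nkl tkl alm) (der_coef_twins_diag two_neq0 tkl akm).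
move=> e; have : 2%:R * c k l = 0 by rewrite -(subrr (c k l + c l l)) -{2}e; ring.
by move/eqP; rewrite mulf_eq0 (negbTE two_neq0) (negbTE ckl).
Qed.

End DerivationCoefficients.

Theorem lemma3p5 (K : fieldType) (hK : [pchar K] =i pred0)
  (n : nat) (adj : rel 'I_n)
  (hsimple : simple_graph adj) (hconn : connected_graph adj)
  (hn : (3 <= n)%N)
  (d : {linear 'rV[K]_n -> 'rV[K]_n}) (hd : is_derivation adj d)
  (k l : 'I_n) (hkl : k != l) (hdkl : der_coef d k l != 0) :
  exists T : {set 'I_n},
    [/\ is_twin_class adj T, (3 <= #|T|)%N, k \in T & l \in T].
Proof.
case: hsimple => adj_sym _.
have two_neq0 : (2%:R : K) != 0 by rewrite (pcharf0P K).1.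
have nlk : l != k by rewrite eq_sym.
have [m alm] := connect_neighbour (hconn l k) nlk.
exists (twin_class adj k); split.
- by exists k.
- exact (der_coef_twin_class_card hd two_neq0 adj_sym hkl hdkl alm).
- by rewrite inE; apply/twinsP.
- by rewrite inE; exact (der_coef_twins hd alm hdkl).
Qed.
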